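(* Let $M/K$ be a finite extension of fields with $M$ not algebraically closed. If $M$ has a first-order model of $\mathbb{Z}$ in the language of rings augmented by finitely many parameters from $M$, then $K$ has a first-order model of $\mathbb{Z}$ in the language of rings augmented by finitely many parameters from $K$.
   Context: A first-order model of $\mathbb{Z}$ (with addition and multiplication) in a field $L$ in the language of rings with parameters is a bijection from $\mathbb{Z}$ onto a subset $D\subseteq L^d$ definable with those parameters, such that the images of the graphs of addition and multiplication are definable subsets of $D^3$. *)

From HB Require Import structures.
From mathcomp Require Import all_boot all_order all_algebra all_field.
Set Implicit Arguments. Unset Strict Implicit. Unset Printing Implicit Defensive.
Import GRing.Theory.
Local Open Scope ring_scope.

(* A subset of L^(k*d), given as a predicate on k-tuples of d-tuples
   (concatenated), is definable in the language of rings with parameters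
   from L if some first-order ring formula with constants from L
   (GRing.formula L) holds exactly at the concatenated tuple. *)
Definition definable1 (L : fieldType) (d : nat) (D : d.-tuple L -> Prop) :=
  exists f : GRing.formula L,
    forall x : d.-tuple L, GRing.holds (x : seq L) f <-> D x.

Definition definable3 (L : fieldType) (d : nat)
    (R : d.-tuple L -> d.-tuple L -> d.-tuple L -> Prop) :=
  exists f : GRing.formula L,
    forall x y z : d.-tuple L,
      GRing.holds ((x : seq L) ++ (y : seq L) ++ (z : seq L)) f <-> R x y z.

Definition has_Z_model (L : fieldType) : Prop :=
  exists (d : nat) (phi : int -> d.-tuple L),
    injective phi /\
    definable1 (fun x => exists n : int, x = phi n) /\
    definable3 (fun x y z => exists a b : int,
                  x = phi a /\ y = phi b /\ z = phi (a + b)%R) /\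
    definable3 (fun x y z => exists a b : int,
                  x = phi a /\ y = phi b /\ z = phi (a * b)%R).

From HB Require Import structures.
From mathcomp Require Import all_boot all_order all_algebra all_field.
From Stdlib Require Import Setoid.
Set Implicit Arguments. Unset Strict Implicit. Unset Printing Implicit Defensive.
Import GRing.Theory.
Local Open Scope ring_scope.

(* Proof idea: M is interpretable in K.  Fix a K-basis b_0, ..., b_(n-1) of M;
   an element x of M is coded by its coordinate vector (x_0, ..., x_(n-1)) in
   K^n, so M^d is coded by K^(d*n).  Addition of M is coordinatewise and
   multiplication is given by the structure constants c_(a,b,j), the
   coordinates of b_a * b_b; both are polynomial in the coordinates.  Hence
   every ring formula over M with variables X_i translates to a ring formula
   over K with variables X_(i*n+j), j < n: terms translate coordinatewise,
   an equation becomes n equations, and a quantifier over X_i becomes a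
   block of n quantifiers.  Transporting a model phi : Z -> M^d along the
   coding bijection M^d ~ K^(d*n) gives a model of Z in K. *)

Section FormulaFacts.
Variable R : unitRingType.

Definition agree (E E' : seq R) (l : seq nat) :=
  forall k, k \notin l -> nth 0 E' k = nth 0 E k.

Definition andL (F : nat -> GRing.formula R) (l : seq nat) : GRing.formula R :=
  foldr (fun j g => GRing.And (F j) g) (GRing.Bool true) l.

Lemma holds_andL E F l :
  GRing.holds E (andL F l) <-> (forall j, j \in l -> GRing.holds E (F j)).
Proof.
elim: l => [|a l IH] /=; first by split.
split=> [[Ha /IH Hl] j|H]; first by rewrite in_cons => /orP[/eqP->|]; auto.
split; first by apply: H; rewrite mem_head.
by apply/IH => j jl; apply: H; rewrite in_cons jl orbT.
Qed.

Lemma holds_existsL E g l :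
  GRing.holds E (foldr (@GRing.Exists R) g l) <->
  exists E', agree E E' l /\ GRing.holds E' g.
Proof.
elim: l E => [|v l IH] E /=.
  split=> [H|[E' [HE Hg]]]; first by exists E.
  by apply: (GRing.eq_holds _ Hg) => k; rewrite HE.
split=> [[x /IH [E' [HE Hg]]]|[E' [HE Hg]]].
  exists E'; split=> // k; rewrite in_cons negb_or => /andP[kv kl].
  by rewrite HE // nth_set_nth /= (negbTE kv).
exists (nth 0 E' v); apply/IH; exists E'; split=> // k kl.
rewrite nth_set_nth /=; case: eqP => [->//|/eqP kv].
by rewrite HE // in_cons negb_or kv.
Qed.

Lemma holds_forallL E g l :
  GRing.holds E (foldr (@GRing.Forall R) g l) <->
  forall E', agree E E' l -> GRing.holds E' g.
Proof.
elim: l E => [|v l IH] E /=.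
  split=> [H E' HE|H]; last by apply: H.
  by apply: (GRing.eq_holds _ H) => k; rewrite HE.
split=> [H E' HE|H x].
  move/IH: (H (nth 0 E' v)); apply=> k kl.
  rewrite nth_set_nth /=; case: eqP => [->//|/eqP kv].
  by rewrite HE // in_cons negb_or kv.
apply/IH => E' HE; apply: H => k; rewrite in_cons negb_or => /andP[kv kl].
by rewrite HE // nth_set_nth /= (negbTE kv).
Qed.

Lemma eval_bigAdd E m (F : 'I_m -> GRing.term R) :
  GRing.eval E (\big[GRing.Add/GRing.NatConst R 0]_(a < m) F a) =
  \sum_(a < m) GRing.eval E (F a).
Proof. by apply: (big_morph (GRing.eval E)) => //=; rewrite mulr0n. Qed.

End FormulaFacts.

Section Restriction.
Variables (K : fieldType) (M : fieldExtType K).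

Local Notation n := (\dim {:M}).
Local Notation basis := (vbasis {:M}).

Lemma dim_gt0 : (0 < n)%N.
Proof.
rewrite lt0n dimv_eq0; apply/negP => /eqP M0.
by have := memvf (1 : M); rewrite M0 memv0 oner_eq0.
Qed.

(* The j-th coordinate in the basis, extended by 0 to all j : nat. *)
Definition crd (j : nat) (x : M) : K :=
  oapp (fun o : 'I_n => coord basis o x) 0 (insub j).

Fact crd_is_scalar j : scalar (crd j).
Proof.
move=> a x y; rewrite /crd; case: insubP => [o _ _|_] /=; last by rewrite mulr0 addr0.
by rewrite linearP.
Qed.
HB.instance Definition _ j := GRing.isLinear.Build K M K *%R (crd j) (crd_is_scalar j).

Lemma crd_expand x : x = \sum_(i < n) crd i x *: basis`_i.
Proof.
rewrite {1}(coord_vbasis (memvf x)); apply: eq_bigr => i _.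
by rewrite /crd valK.
Qed.

Lemma crd_inj x y : (forall j, (j < n)%N -> crd j x = crd j y) -> x = y.
Proof.
move=> Hxy; rewrite (crd_expand x) (crd_expand y).
by apply: eq_bigr => i _; rewrite Hxy.
Qed.

Definition of_crd (f : nat -> K) : M := \sum_(i < n) f i *: basis`_i.

Lemma crd_of_crd f j : (j < n)%N -> crd j (of_crd f) = f j.
Proof.
move=> jn; rewrite /crd insubT /=.
exact: coord_sum_free (basis_free (vbasisP _)).
Qed.

Lemma crdM x y j :
  crd j (x * y) =
  \sum_(a < n) \sum_(b < n) (crd a x * crd b y) * crd j (basis`_a * basis`_b).
Proof.
rewrite {1}(crd_expand x) {1}(crd_expand y) mulr_suml linear_sum.
apply: eq_bigr => a _; rewrite mulr_sumr linear_sum; apply: eq_bigr => b _.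
by rewrite -scalerAl -scalerAr scalerA linearZ.
Qed.

(* The variable X_i of a formula over M is coded by the block of variables
   X_(i*n), ..., X_(i*n+n-1) over K. *)
Definition encodes (E : seq K) (e : seq M) :=
  forall k, nth 0 E k = crd (k %% n) (nth 0 e (k %/ n)).

Lemma divmod_block i j : (j < n)%N -> ((i * n + j) %/ n = i /\ (i * n + j) %% n = j)%N.
Proof. by move=> jn; rewrite divnMDl ?dim_gt0 // divn_small // addn0 modnMDl modn_small. Qed.

Lemma encodes_var E e i j : encodes E e -> (j < n)%N ->
  nth 0 E (i * n + j) = crd j (nth 0 e i).
Proof. by move=> He jn; rewrite He; case: (divmod_block i jn) => -> ->. Qed.

Definition block i := [seq (i * n + j)%N | j <- iota 0 n].

Lemma mem_block i k : (k \in block i) = (k %/ n == i)%N.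
Proof.
apply/mapP/eqP => [[j]|<-].
  by rewrite mem_iota add0n => jn ->; case: (divmod_block i jn).
exists (k %% n)%N; first by rewrite mem_iota add0n ltn_pmod ?dim_gt0.
exact: divn_eq.
Qed.

Definition enc (e : seq M) : seq K :=
  mkseq (fun k => crd (k %% n) (nth 0 e (k %/ n))) (size e * n).

Lemma size_enc e : size (enc e) = (size e * n)%N.
Proof. exact: size_mkseq. Qed.

Lemma enc_encodes e : encodes (enc e) e.
Proof.
move=> k; case: (ltnP k (size e * n)) => ke; first by rewrite nth_mkseq.
rewrite nth_default ?size_enc // nth_default ?raddf0 //.
by rewrite leqNgt ltn_divLR ?dim_gt0 // -leqNgt.
Qed.

Definition decs (E : seq K) (d : nat) : seq M :=
  mkseq (fun i => of_crd (fun j => nth 0 E (i * n + j))) d.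

Lemma decs_encodes E d : size E = (d * n)%N -> encodes E (decs E d).
Proof.
move=> sE k; case: (ltnP k (d * n)) => kd.
  rewrite nth_mkseq ?ltn_divLR ?dim_gt0 //.
  by rewrite crd_of_crd ?ltn_pmod ?dim_gt0 // -divn_eq.
rewrite nth_default ?sE // nth_default ?raddf0 // size_mkseq.
by rewrite leqNgt ltn_divLR ?dim_gt0 // -leqNgt.
Qed.

Lemma agree_enc E e i x : encodes E e -> agree E (enc (set_nth 0 e i x)) (block i).
Proof.
move=> He k; rewrite mem_block => ki.
by rewrite enc_encodes He nth_set_nth /= (negbTE ki).
Qed.

Lemma encodes_agree E E' e i : encodes E e -> agree E E' (block i) ->
  encodes E' (set_nth 0 e i (of_crd (fun j => nth 0 E' (i * n + j)))).
Proof.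
move=> He HE k; rewrite nth_set_nth /=; case: eqP => [ki|/eqP ki].
  by rewrite crd_of_crd ?ltn_pmod ?dim_gt0 // -ki -divn_eq.
by rewrite HE ?mem_block // He.
Qed.

Lemma encodes_uniqM E e e' : encodes E e -> encodes E e' -> size e = size e' -> e = e'.
Proof.
move=> He He' s; apply: (eq_from_nth (x0 := 0)) => // i _.
by apply: crd_inj => j jn; rewrite -(encodes_var i He jn) (encodes_var i He' jn).
Qed.

Lemma encodes_uniqK E E' e : encodes E e -> encodes E' e -> size E = size E' -> E = E'.
Proof. by move=> He He' s; apply: (eq_from_nth (x0 := 0)) => // k _; rewrite He He'. Qed.

Lemma encodes_cat E1 e1 E2 e2 : encodes E1 e1 -> size E1 = (size e1 * n)%N ->
  encodes E2 e2 -> encodes (E1 ++ E2) (e1 ++ e2).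
Proof.
move=> H1 s1 H2 k; rewrite nth_cat s1; case: (ltnP k (size e1 * n)) => ke.
  by rewrite H1 nth_cat ifT // ltn_divLR ?dim_gt0.
rewrite H2 nth_cat ifF; last by apply/negbTE; rewrite -leqNgt leq_divRL ?dim_gt0.
rewrite -(subnKC ke) addKn.
by rewrite divnMDl ?dim_gt0 // addKn modnMDl.
Qed.

Definition mulT (u v : nat -> GRing.term K) (j : nat) : GRing.term K :=
  \big[GRing.Add/GRing.NatConst K 0]_(a < n) \big[GRing.Add/GRing.NatConst K 0]_(b < n)
     GRing.Mul (GRing.Mul (u a) (v b)) (GRing.Const (crd j (basis`_a * basis`_b))).

Lemma mulT_ok E u v x y :
  (forall a, (a < n)%N -> GRing.eval E (u a) = crd a x) ->
  (forall a, (a < n)%N -> GRing.eval E (v a) = crd a y) ->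
  forall j, GRing.eval E (mulT u v j) = crd j (x * y).
Proof.
move=> Hu Hv j; rewrite /mulT crdM eval_bigAdd; apply: eq_bigr => a _.
by rewrite eval_bigAdd; apply: eq_bigr => b _ /=; rewrite Hu // Hv.
Qed.

Fixpoint trt (t : GRing.term M) : nat -> GRing.term K :=
  match t with
  | GRing.Var i => fun j => GRing.Var K (i * n + j)
  | GRing.Const c => fun j => GRing.Const (crd j c)
  | GRing.NatConst m => fun j => GRing.Const (crd j m%:R)
  | GRing.Add t1 t2 => fun j => GRing.Add (trt t1 j) (trt t2 j)
  | GRing.Opp t1 => fun j => GRing.Opp (trt t1 j)
  | GRing.NatMul t1 m => fun j => GRing.NatMul (trt t1 j) m
  | GRing.Mul t1 t2 => mulT (trt t1) (trt t2)
  | GRing.Inv _ => fun _ => GRing.NatConst K 0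
  | GRing.Exp t1 m => iter m (mulT (trt t1)) (fun j => GRing.Const (crd j 1))
  end.

Lemma trt_ok E e t : GRing.rterm t -> encodes E e ->
  forall j, (j < n)%N -> GRing.eval E (trt t j) = crd j (GRing.eval e t).
Proof.
move=> + He; elim: t => //=.
- by move=> i _ j jn; rewrite (encodes_var _ He).
- by move=> t1 IH1 t2 IH2 /andP[r1 r2] j jn; rewrite IH1 // IH2 // raddfD.
- by move=> t1 IH1 r1 j jn; rewrite IH1 // raddfN.
- by move=> t1 IH1 m r1 j jn; rewrite IH1 // raddfMn.
- move=> t1 IH1 t2 IH2 /andP[r1 r2] j jn.
  by apply: mulT_ok => a an; [apply: IH1 | apply: IH2].
- move=> t1 IH1 m r1; elim: m => [|m IHm] j jn //=.
  by rewrite exprS; apply: mulT_ok => a an; [apply: IH1 | apply: IHm].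
Qed.

Fixpoint trf (f : GRing.formula M) : GRing.formula K :=
  match f with
  | GRing.Bool b => GRing.Bool b
  | GRing.Equal t1 t2 => andL (fun j => GRing.Equal (trt t1 j) (trt t2 j)) (iota 0 n)
  | GRing.Unit _ => GRing.Bool false
  | GRing.And f1 f2 => GRing.And (trf f1) (trf f2)
  | GRing.Or f1 f2 => GRing.Or (trf f1) (trf f2)
  | GRing.Implies f1 f2 => GRing.Implies (trf f1) (trf f2)
  | GRing.Not f1 => GRing.Not (trf f1)
  | GRing.Exists i f1 => foldr (@GRing.Exists K) (trf f1) (block i)
  | GRing.Forall i f1 => foldr (@GRing.Forall K) (trf f1) (block i)
  end.

Lemma trf_ok f : GRing.rformula f -> forall E e, encodes E e ->
  (GRing.holds E (trf f) <-> GRing.holds e f).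
Proof.
elim: f => //=.
- move=> t1 t2 /andP[r1 r2] E e He; rewrite holds_andL /=.
  split=> [H|H j]; last by rewrite mem_iota add0n => jn; rewrite !(trt_ok _ He) // H.
  by apply: crd_inj => j jn; rewrite -!(trt_ok _ He) //; apply: H; rewrite mem_iota.
- by move=> f1 IH1 f2 IH2 /andP[r1 r2] E e He; move: (IH1 r1 E e He) (IH2 r2 E e He); tauto.
- by move=> f1 IH1 f2 IH2 /andP[r1 r2] E e He; move: (IH1 r1 E e He) (IH2 r2 E e He); tauto.
- by move=> f1 IH1 f2 IH2 /andP[r1 r2] E e He; move: (IH1 r1 E e He) (IH2 r2 E e He); tauto.
- by move=> f1 IH1 r1 E e He; move: (IH1 r1 E e He); tauto.
- move=> i f1 IH1 r1 E e He; rewrite holds_existsL; split.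
    by move=> [E' [HE Hg]]; eexists; apply/(IH1 r1 _ _ (encodes_agree He HE)).
  move=> [x Hx]; exists (enc (set_nth 0 e i x)); split; first exact: agree_enc.
  by apply/(IH1 r1 _ _ (enc_encodes _)).
- move=> i f1 IH1 r1 E e He; rewrite holds_forallL; split.
    by move=> H x; apply/(IH1 r1 _ _ (enc_encodes _)); apply/H/agree_enc.
  by move=> H E' HE; apply/(IH1 r1 _ _ (encodes_agree He HE)).
Qed.

Lemma formula_restrict (f : GRing.formula M) :
  exists g : GRing.formula K,
    forall E e, encodes E e -> GRing.holds E g <-> GRing.holds e f.
Proof.
exists (trf (GRing.to_rform f)) => E e He.
by rewrite (trf_ok (GRing.to_rform_rformula f) He) GRing.to_rformP.
Qed.

Section Tuples.
Variable d : nat.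

Definition encT (x : d.-tuple M) : (d * n).-tuple K :=
  Tuple (introT eqP (etrans (size_enc x) (congr1 (muln^~ n) (size_tuple x)))).

Definition decT (x : (d * n).-tuple K) : d.-tuple M :=
  Tuple (introT eqP (size_mkseq _ d) : size (decs x d) == d).

Lemma decT_encodes (x : (d * n).-tuple K) : encodes x (decT x).
Proof. by apply: decs_encodes; rewrite size_tuple. Qed.

Lemma encTK : cancel encT decT.
Proof.
move=> x; apply: val_inj; apply: (encodes_uniqM (decT_encodes (encT x)) (enc_encodes x)).
by rewrite !size_tuple.
Qed.

Lemma decTK : cancel decT encT.
Proof.
move=> x; apply: val_inj; apply: (encodes_uniqK (enc_encodes (decT x)) (decT_encodes x)).
by rewrite !size_tuple.
Qed.

Lemma eq_encT x y : x = encT y <-> decT x = y.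
Proof. by split=> [->|<-]; rewrite ?encTK ?decTK. Qed.

Lemma cat3_encodes (x y z : (d * n).-tuple K) :
  encodes ((x : seq K) ++ (y : seq K) ++ (z : seq K))
          ((decT x : seq M) ++ (decT y : seq M) ++ (decT z : seq M)).
Proof.
have size_decT (w : (d * n).-tuple K) : size w = (size (decT w) * n)%N.
  by rewrite !size_tuple.
by do 2?apply: encodes_cat => //; apply: decT_encodes.
Qed.

Lemma definable1_restrict (D : d.-tuple M -> Prop) :
  definable1 D -> definable1 (fun x => D (decT x)).
Proof.
move=> [f Hf]; have [g Hg] := formula_restrict f.
by exists g => x; rewrite (Hg _ _ (decT_encodes x)) Hf.
Qed.

Lemma definable3_restrict (R : d.-tuple M -> d.-tuple M -> d.-tuple M -> Prop) :
  definable3 R -> definable3 (fun x y z => R (decT x) (decT y) (decT z)).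
Proof.
move=> [f Hf]; have [g Hg] := formula_restrict f.
by exists g => x y z; rewrite (Hg _ _ (cat3_encodes x y z)) Hf.
Qed.

End Tuples.
End Restriction.
Arguments encT {K M d}.

Theorem proposition7p1 (K : fieldType) (M : fieldExtType K) :
  ~ GRing.closed_field_axiom M -> has_Z_model M -> has_Z_model K.
Proof.
move=> _ [d [phi [phi_inj [Dphi [Dadd Dmul]]]]].
have Dphi' := definable1_restrict Dphi.
have Dadd' := definable3_restrict Dadd.
have Dmul' := definable3_restrict Dmul.
exists (d * \dim {:M})%N, (fun m => encT (phi m)); split.
  by move=> a b /(can_inj (@encTK K M d)) /phi_inj.
split; [|split].
- move: Dphi' => [f Hf]; exists f => x; rewrite Hf.
  by split=> -[m Hm]; exists m; apply/eq_encT.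
- move: Dadd' => [f Hf]; exists f => x y z; rewrite Hf.
  by split=> -[a [b Habc]]; exists a, b; [rewrite !eq_encT | rewrite -!eq_encT].
- move: Dmul' => [f Hf]; exists f => x y z; rewrite Hf.
  by split=> -[a [b Habc]]; exists a, b; [rewrite !eq_encT | rewrite -!eq_encT].
Qed.
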